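(* Let $\mathcal{B}\subseteq\{1,2\}^3$ be a basic set, $X^{\mathcal{B}}$ the associated $S_2$-SFT and $F=\{F^{(a)},F^{(b)}\}$ its SNRE with sequences $(a_n),(b_n)$. Then $F$ is of one of the following four types: (1) equal growth type; (2) dominating type; (3) oscillating type; (4) cooperating type.
   Context: $S_2$ is the free semigroup on two generators, identified with finite words over $\{1,2\}$ (root $\epsilon$); alphabet $\{1,2\}$. A basic set $\mathcal{B}\subseteq\{1,2\}^3$ is a set of admissible 2-blocks $(i,i_1,i_2)$ and $X^{\mathcal{B}}$ the associated $S_2$-SFT. Its SNRE is $F^{(a)}(x,y)=\sum_{(1,i,j)\in\mathcal{B}}z_iz_j$, $F^{(b)}(x,y)=\sum_{(2,i,j)\in\mathcal{B}}z_iz_j$ ($z_1=x,z_2=y$), with $a_0=b_0=1$, $a_n=F^{(a)}(a_{n-1},b_{n-1})$, $b_n=F^{(b)}(a_{n-1},b_{n-1})$ for $n\ge1$ ($a_n$, $b_n$ are the numbers of admissible $n$-blocks with root colored $1$, resp. $2$). Types: equal growth: $a_n=b_n$ for all $n\ge1$. Dominating: either $a_n\ge b_n$ for all $n\ge1$ or $b_n\ge a_n$ for all $n\ge 1$. Oscillating: there are two infinite subsequences of $\mathbb{N}$ such that $a_n\ge b_n$ along the first and $a_n<b_n$ along the second. Cooperating: with $c_n=a_n+b_n$, one has $c_n=c_{n-1}^2+g_{n-1}$ for all $n\ge2$, where $g_m=G(a_m,b_m)$ for a polynomial $G$ with nonnegative integer coefficients and $g_m\le c_m^2$ for all $m$.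 *)

From mathcomp Require Import all_boot.
Set Implicit Arguments. Unset Strict Implicit. Unset Printing Implicit Defensive.

Definition color := 'I_2.
Definition col1 : color := ord0.
Definition col2 : color := ord_max.

(* A basic set: a set of admissible 2-blocks (i, i1, i2) in {1,2}^3. *)
Definition basic_set := {set color * color * color}.

Definition zvar (x y : nat) (i : color) : nat := if i == col1 then x else y.

Definition Fpoly (B : basic_set) (c : color) (x y : nat) : nat :=
  \sum_(i : color) \sum_(j : color)
     (if (c, i, j) \in B then zvar x y i * zvar x y j else 0).

Definition Fa (B : basic_set) := Fpoly B col1.
Definition Fb (B : basic_set) := Fpoly B col2.

Fixpoint ab_seq (B : basic_set) (n : nat) : nat * nat :=
  match n with
  | 0 => (1, 1)
  | n'.+1 => let p := ab_seq B n' in (Fa B p.1 p.2, Fb B p.1 p.2)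
  end.

Definition a_seq (B : basic_set) (n : nat) : nat := (ab_seq B n).1.
Definition b_seq (B : basic_set) (n : nat) : nat := (ab_seq B n).2.
Definition c_seq (B : basic_set) (n : nat) : nat := a_seq B n + b_seq B n.

(* Bivariate polynomials with nonnegative integer coefficients, as a finite
   list of monomials (coef, deg_x, deg_y). *)
Definition natpoly2 := seq (nat * nat * nat).
Definition eval2 (G : natpoly2) (x y : nat) : nat :=
  \sum_(m <- G) m.1.1 * x ^ m.1.2 * y ^ m.2.

Definition equal_growth_type (B : basic_set) : Prop :=
  forall n, 1 <= n -> a_seq B n = b_seq B n.

Definition dominating_type (B : basic_set) : Prop :=
  (forall n, 1 <= n -> b_seq B n <= a_seq B n) \/
  (forall n, 1 <= n -> a_seq B n <= b_seq B n).

Definition oscillating_type (B : basic_set) : Prop :=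
  (forall N, exists n, N <= n /\ b_seq B n <= a_seq B n) /\
  (forall N, exists n, N <= n /\ a_seq B n < b_seq B n).

Definition cooperating_type (B : basic_set) : Prop :=
  exists G : natpoly2,
    (forall n, 2 <= n ->
       c_seq B n = (c_seq B n.-1) ^ 2 + eval2 G (a_seq B n.-1) (b_seq B n.-1)) /\
    (forall m, eval2 G (a_seq B m) (b_seq B m) <= (c_seq B m) ^ 2).

From mathcomp Require Import all_boot zify.
Set Implicit Arguments. Unset Strict Implicit.

(* Both F^(a) and F^(b) are quadratic forms p x^2 + q xy + r y^2 with
   p, r in {0,1} and q in {0,1,2}, so the classification is a finite case
   analysis on the two coefficient triples.  If the summed form dominates
   (x + y)^2 coefficientwise, then c_n - c_{n-1}^2 is a polynomial in
   (a_{n-1}, b_{n-1}) bounded by c_{n-1}^2: cooperating type.  Otherwise an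
   invariant of the pairs (a_n, b_n), preserved by the recursion, decides the
   type: a = b when the two coefficient sums agree; b <= a (or b <= a <= 2b)
   for dominating type; and for F = (xy + y^2, x^2) and its mirror image the
   pair alternates between the regions 3b <= a and 9a <= 4b: oscillating type. *)

Definition qform (k : nat * nat * nat) (x y : nat) : nat :=
  k.1.1 * x ^ 2 + k.1.2 * (x * y) + k.2 * y ^ 2.

Definition qsum (k : nat * nat * nat) : nat := k.1.1 + k.1.2 + k.2.

Definition qrev (k : nat * nat * nat) : nat * nat * nat := (k.2, k.1.2, k.1.1).

Lemma qform_diag k x : qform k x x = qsum k * x ^ 2.
Proof. rewrite /qform /qsum; nia. Qed.

Lemma qform_rev k x y : qform (qrev k) y x = qform k x y.
Proof. rewrite /qform /=; nia. Qed.

Lemma qsum_rev k : qsum (qrev k) = qsum k.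
Proof. rewrite /qsum /=; lia. Qed.

(* Substituting x = y + t turns the comparison into one of the
   coefficients of t^2, ty and y^2. *)
Lemma leq_qform k k' x y :
  y <= x -> k'.1.1 <= k.1.1 -> 2 * k'.1.1 + k'.1.2 <= 2 * k.1.1 + k.1.2 ->
  qsum k' <= qsum k -> qform k' x y <= qform k x y.
Proof.
move=> /subnKC <-; set t := x - y => le_p le_pq le_sum.
have expand l : qform l (y + t) y
    = l.1.1 * t ^ 2 + (2 * l.1.1 + l.1.2) * (t * y) + qsum l * y ^ 2.
  by rewrite /qform /qsum; nia.
by rewrite !expand; apply: leq_add; [apply: leq_add|]; apply: leq_mul.
Qed.

Definition qadd (k l : nat * nat * nat) : nat * nat * nat :=
  (k.1.1 + l.1.1, k.1.2 + l.1.2, k.2 + l.2).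

Lemma qformD k l x y : qform (qadd k l) x y = qform k x y + qform l x y.
Proof. rewrite /qform /= !mulnDl; lia. Qed.

Lemma qform_sqr x y : qform (1, 2, 1) x y = (x + y) ^ 2.
Proof. rewrite /qform /=; nia. Qed.

Lemma qform_leq_sqr k x y :
  k.1.1 <= 1 -> k.1.2 <= 2 -> k.2 <= 1 -> qform k x y <= (x + y) ^ 2.
Proof.
move=> *; rewrite -qform_sqr /qform /=.
by apply: leq_add; [apply: leq_add|]; apply: leq_mul.
Qed.

Definition qpoly (k : nat * nat * nat) : natpoly2 :=
  [:: (k.1.1, 2, 0); (k.1.2, 1, 1); (k.2, 0, 2)].

Lemma eval2_qpoly k x y : eval2 (qpoly k) x y = qform k x y.
Proof.
by rewrite /eval2 !big_cons big_nil /qform /= expn0 !expn1 !muln1 addn0 !mulnA addnA.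
Qed.

Definition coefs (B : basic_set) (c : color) : nat * nat * nat :=
  (((c, col1, col1) \in B : nat),
   ((c, col1, col2) \in B) + ((c, col2, col1) \in B),
   ((c, col2, col2) \in B : nat)).

Lemma Fpoly_qform B c x y : Fpoly B c x y = qform (coefs B c) x y.
Proof.
rewrite /Fpoly /qform /coefs !big_ord_recl !big_ord0 /= /zvar.
have -> : lift ord0 ord0 = col2 :> color by apply/val_inj.
rewrite /=; do 4 case: (_ \in B); rewrite /=; nia.
Qed.

Lemma coefs_bounded B c :
  [/\ (coefs B c).1.1 <= 1, (coefs B c).1.2 <= 2 & (coefs B c).2 <= 1].
Proof. by split; rewrite ?leq_b1 // -[2]/(1 + 1) leq_add ?leq_b1. Qed.

Section Classification.

Variables (B : basic_set) (u v : nat * nat * nat).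
Hypotheses (Bu : coefs B col1 = u) (Bv : coefs B col2 = v).

Lemma a_seqS n : a_seq B n.+1 = qform u (a_seq B n) (b_seq B n).
Proof. by rewrite /a_seq /= /Fa Fpoly_qform Bu. Qed.

Lemma b_seqS n : b_seq B n.+1 = qform v (a_seq B n) (b_seq B n).
Proof. by rewrite /b_seq /= /Fb Fpoly_qform Bv. Qed.

Lemma ab_seq_invariant (P : nat -> nat -> Prop) :
  P 1 1 -> (forall x y, P x y -> P (qform u x y) (qform v x y)) ->
  forall n, P (a_seq B n) (b_seq B n).
Proof. by move=> P11 PS; elim=> // n IH; rewrite a_seqS b_seqS; apply: PS. Qed.

Lemma equal_growth_of_qsum : qsum u = qsum v -> equal_growth_type B.
Proof.
move=> eq_sum n _; apply: (ab_seq_invariant (P := eq)) => // x _ <-.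
by rewrite !qform_diag eq_sum.
Qed.

Lemma dominating_of_leq_coefs :
  v.1.1 <= u.1.1 -> 2 * v.1.1 + v.1.2 <= 2 * u.1.1 + u.1.2 ->
  qsum v <= qsum u -> dominating_type B.
Proof.
move=> le_p le_pq le_sum; left=> n _.
by apply: (ab_seq_invariant (P := fun x y => y <= x)) => // x y /leq_qform; apply.
Qed.

Lemma dominating_of_leq_rev_coefs :
  u.2 <= v.2 -> 2 * u.2 + u.1.2 <= 2 * v.2 + v.1.2 ->
  qsum u <= qsum v -> dominating_type B.
Proof.
move=> le_r le_rq le_sum; right=> n _.
apply: (ab_seq_invariant (P := fun x y => x <= y)) => // x y le_xy.
by rewrite -!(qform_rev _ x y) leq_qform ?qsum_rev.
Qed.

Lemma dominating_xy_xx : u = (0, 2, 0) -> v = (1, 0, 0) -> dominating_type B.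
Proof.
move=> Eu Ev.
have bounds n : b_seq B n <= a_seq B n <= 2 * b_seq B n.
  apply: (ab_seq_invariant (P := fun x y => y <= x <= 2 * y)) => // x y.
  rewrite Eu Ev /qform /= => /andP[le_yx le_x2y]; apply/andP; split; nia.
by left=> n _; case/andP: (bounds n).
Qed.

Lemma dominating_yy_xy : u = (0, 0, 1) -> v = (0, 2, 0) -> dominating_type B.
Proof.
move=> Eu Ev.
have bounds n : a_seq B n <= b_seq B n <= 2 * a_seq B n.
  apply: (ab_seq_invariant (P := fun x y => x <= y <= 2 * x)) => // x y.
  rewrite Eu Ev /qform /= => /andP[le_xy le_y2x]; apply/andP; split; nia.
by right=> n _; case/andP: (bounds n).
Qed.

Lemma oscillating_of_alternation (P Q : nat -> nat -> Prop) n0 :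
  P (a_seq B n0) (b_seq B n0) ->
  (forall x y, P x y -> Q (qform u x y) (qform v x y)) ->
  (forall x y, Q x y -> P (qform u x y) (qform v x y)) ->
  (forall x y, P x y -> y <= x) -> (forall x y, Q x y -> x < y) ->
  oscillating_type B.
Proof.
move=> P0 PQ QP Ple Qlt.
have even k : P (a_seq B (n0 + k.*2)) (b_seq B (n0 + k.*2)).
  elim: k => [|k IH]; first by rewrite addn0.
  by rewrite doubleS !addnS !(a_seqS, b_seqS); apply/QP/PQ.
split=> N; [exists (n0 + N.*2) | exists (n0 + N.*2).+1]; split; try lia.
- exact/Ple/even.
- by rewrite a_seqS b_seqS; apply/Qlt/PQ/even.
Qed.

Lemma oscillating_xy_yy : u = (0, 1, 1) -> v = (1, 0, 0) -> oscillating_type B.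
Proof.
move=> Eu Ev.
(* (a_3, b_3) = (28, 9) is the first pair with 3 b <= a. *)
apply: (oscillating_of_alternation (n0 := 3)
          (P := fun x y => 0 < x /\ 3 * y <= x)
          (Q := fun x y => 0 < y /\ 9 * x <= 4 * y)).
- by rewrite !(a_seqS, b_seqS) Eu Ev.
- by rewrite Eu Ev /qform /= => x y [x_gt0 le_3y_x]; split; nia.
- by rewrite Eu Ev /qform /= => x y [y_gt0 le_9x_4y]; split; nia.
- by move=> x y []; lia.
- by move=> x y []; lia.
Qed.

Lemma oscillating_yy_xx : u = (0, 0, 1) -> v = (1, 1, 0) -> oscillating_type B.
Proof.
move=> Eu Ev.
(* (a_4, b_4) = (784, 333) is the first pair with 9 b <= 4 a. *)
apply: (oscillating_of_alternation (n0 := 4)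
          (P := fun x y => 0 < x /\ 9 * y <= 4 * x)
          (Q := fun x y => 0 < y /\ 3 * x <= y)).
- by rewrite !(a_seqS, b_seqS) Eu Ev.
- by rewrite Eu Ev /qform /= => x y [x_gt0 le_9y_4x]; split; nia.
- by rewrite Eu Ev /qform /= => x y [y_gt0 le_3x_y]; split; nia.
- by move=> x y []; lia.
- by move=> x y []; lia.
Qed.

Lemma c_seqS n : c_seq B n.+1 = qform (qadd u v) (a_seq B n) (b_seq B n).
Proof. by rewrite /c_seq a_seqS b_seqS qformD. Qed.

Lemma cooperating_of_coef_sums :
  0 < u.1.1 + v.1.1 -> 2 <= u.1.2 + v.1.2 -> 0 < u.2 + v.2 -> cooperating_type B.
Proof.
move=> p_gt0 q_ge2 r_gt0.
set k := ((u.1.1 + v.1.1).-1, u.1.2 + v.1.2 - 2, (u.2 + v.2).-1).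
have uvE : qadd u v = qadd (1, 2, 1) k.
  by rewrite /qadd /=; congr (_, _, _); lia.
have [] := coefs_bounded B col1; have [] := coefs_bounded B col2; rewrite Bu Bv => *.
exists (qpoly k); split=> [[|[|n]] // _ | m]; rewrite eval2_qpoly.
- by rewrite c_seqS uvE qformD qform_sqr.
- by rewrite /c_seq qform_leq_sqr //=; lia.
Qed.

End Classification.

Theorem theorem3 (B : basic_set) :
  equal_growth_type B \/ dominating_type B \/ oscillating_type B \/ cooperating_type B.
Proof.
(* Unfolding only the right-hand sides keeps [coefs B c] on the left, so the
   case split on the eight memberships yields the hypotheses Bu and Bv. *)
move: (erefl (coefs B col1)) (erefl (coefs B col2)).
rewrite {2 4}/coefs; do 8 case: (_ \in B); move=> Bu Bv;
first
  [ by left; apply: (equal_growth_of_qsum Bu Bv)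
  | by right; left; apply: (dominating_of_leq_coefs Bu Bv)
  | by right; left; apply: (dominating_of_leq_rev_coefs Bu Bv)
  | by right; left; apply: (dominating_xy_xx Bu Bv)
  | by right; left; apply: (dominating_yy_xy Bu Bv)
  | by right; right; left; apply: (oscillating_xy_yy Bu Bv)
  | by right; right; left; apply: (oscillating_yy_xx Bu Bv)
  | by right; right; right; apply: (cooperating_of_coef_sums Bu Bv) ].
Qed.
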